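(* If $\Gamma\in\mathcal S$ has vertices $v_1,\dots,v_n$, then $\left|\sum_{i=1}^n d(v_i)\right|\le 3n+1$.
   Context: A plumbing tree is a finite tree $\Gamma$ each of whose vertices $v$ carries an integer decoration $d(v)$. $\Gamma$ is minimal if no vertex has decoration $-1$. For $n\ge 1$ let $(\mathbb Z^n,Q_n)$ be the lattice with basis $E_1,\dots,E_n$ and $Q_n(E_i,E_j)=-\delta_{ij}$, and let $K=\sum_{i=1}^n E_i$. A plumbing tree $\Gamma$ on $n$ vertices is a symplectic plumbing tree if there is a map $\varphi$ (an embedding) from its vertex set to $\mathbb Z^n$ such that: for distinct vertices $v_1,v_2$, $Q_n(\varphi(v_1),\varphi(v_2))$ is $1$ if they are adjacent and $0$ otherwise; $Q_n(\varphi(v),\varphi(v))=d(v)$ for every $v$; and $Q_n(\varphi(v),K)+Q_n(\varphi(v),\varphi(v))=-2$ for every $v$. $\mathcal S$ is the set of minimal, connected symplectic plumbing trees. *)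

From HB Require Import structures.
From mathcomp Require Import all_boot all_order all_algebra.
Set Implicit Arguments. Unset Strict Implicit. Unset Printing Implicit Defensive.
Import Order.TTheory GRing.Theory Num.Theory.
Local Open Scope ring_scope.

Definition simple_graph (n : nat) (e : rel 'I_n) : Prop :=
  symmetric e /\ irreflexive e.

Definition graph_connected (n : nat) (e : rel 'I_n) : Prop :=
  forall x y : 'I_n, connect e x y.

Definition graph_acyclic (n : nat) (e : rel 'I_n) : Prop :=
  forall s : seq 'I_n, uniq s -> (3 <= size s)%N -> ~~ cycle e s.

Definition is_tree (n : nat) (e : rel 'I_n) : Prop :=
  simple_graph e /\ graph_connected e /\ graph_acyclic e.

Definition Qn (n : nat) (x y : 'I_n -> int) : int := - \sum_(i < n) x i * y i.

Definition Kn {n : nat} : 'I_n -> int := fun _ => 1.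

Definition symplectic_embedding (n : nat) (e : rel 'I_n) (d : 'I_n -> int)
    (phi : 'I_n -> 'I_n -> int) : Prop :=
  (forall v1 v2 : 'I_n, v1 != v2 ->
      Qn (phi v1) (phi v2) = (if e v1 v2 then 1 else 0)) /\
  (forall v : 'I_n, Qn (phi v) (phi v) = d v) /\
  (forall v : 'I_n, Qn (phi v) (@Kn n) + Qn (phi v) (phi v) = -2).

Definition symplectic_plumbing_tree (n : nat) (e : rel 'I_n) (d : 'I_n -> int) : Prop :=
  is_tree e /\ exists phi, symplectic_embedding e d phi.

Definition minimal_tree (n : nat) (d : 'I_n -> int) : Prop :=
  forall v : 'I_n, d v != -1.

Definition in_S (n : nat) (e : rel 'I_n) (d : 'I_n -> int) : Prop :=
  minimal_tree d /\ graph_connected e /\ symplectic_plumbing_tree e d.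

From mathcomp Require Import all_boot all_order all_algebra.
From mathcomp Require Import zify ring lra.
Set Implicit Arguments. Unset Strict Implicit. Unset Printing Implicit Defensive.
Import Order.TTheory GRing.Theory Num.Theory.

(* Let s be the sum of the images phi v of all vertices.  Adjunction gives
   -Q(phi v, K) = d(v) + 2, so the coordinates of s add up to D + 2n, where D is
   the sum of the decorations; and -Q(s, s) = -D - 2 #edges <= -D - 2(n - 1),
   since the tree is connected.  Cauchy-Schwarz on the n coordinates of s gives
   (D + 2n)^2 <= n (-D - 2n + 2), a quadratic inequality forcing -D <= 3n + 1,
   while D <= 0 because Q is negative definite. *)

Section SpanningTree.
Variables (n : nat) (e : rel 'I_n) (r : 'I_n).
Hypothesis e_sym : symmetric e.
Hypothesis r_connect : forall v, connect e r v.

Definition reachable_in (v : 'I_n) (m : nat) : bool :=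
  [exists p : m.-tuple 'I_n, path e r p && (last r p == v)].

Lemma reachable_in_exists v : exists m, reachable_in v m.
Proof.
have /connectP [p e_p ->] := r_connect v.
by exists (size p); apply/existsP; exists (in_tuple p); rewrite /= e_p eqxx.
Qed.

Definition dist v := ex_minn (reachable_in_exists v).

Lemma closer_neighbour_exists v : v != r -> exists u, e u v && (dist u < dist v).
Proof.
move=> v_ne_r; rewrite /dist.
case: ex_minnP => m /existsP [p /andP [e_p /eqP p_v]] _.
case: (lastP (tval p)) e_p p_v (size_tuple p) => [|q y].
  by move=> _ /= r_v; rewrite r_v eqxx in v_ne_r.
rewrite rcons_path last_rcons size_rcons => /andP [e_q e_qy] <- <-.
exists (last r q); rewrite e_qy /=; case: ex_minnP => k _ min_k; rewrite ltnS min_k //.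
by apply/existsP; exists (in_tuple q); rewrite /= e_q eqxx.
Qed.

(* The edges {v, parent v}, v != r, form a breadth-first spanning tree. *)
Definition parent v := odflt r [pick u | e u v && (dist u < dist v)].

Lemma parentP v : v != r -> e (parent v) v && (dist (parent v) < dist v).
Proof.
move=> v_ne_r; rewrite /parent; case: pickP => [u -> //|none].
by have [u] := closer_neighbour_exists v_ne_r; rewrite none.
Qed.

Lemma parent_indicator_le_edge v w :
  ((w == parent v) && (v != r)) + ((v == parent w) && (w != r)) <= e v w.
Proof.
case: (boolP ((w == parent v) && (v != r))) => [/andP [/eqP w_pv /parentP]|_];
  case: (boolP ((v == parent w) && (w != r))) => [/andP [/eqP v_pw /parentP]|_] //=.
- by rewrite -v_pw -w_pv => /andP [_ lt_vw] /andP [_ /(ltn_trans lt_vw)]; rewrite ltnn.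
- by rewrite -w_pv e_sym => /andP [->].
- by rewrite -v_pw => /andP [->].
Qed.

Lemma card_ordered_edges_ge : 2 * n.-1 <= \sum_v \sum_w e v w.
Proof.
have sum_indicator (b : bool) (a : 'I_n) : \sum_w ((w == a) && b) = b.
  case: b; last by rewrite big1 // => w _; rewrite andbF.
  by rewrite (bigD1 a) //= eqxx big1 // => w /negbTE ->.
have card_non_root : \sum_(v : 'I_n) (v != r) = n.-1.
  rewrite -[n in RHS]card_ord -(cardC1 r) -sum1_card [RHS]big_mkcond /=.
  by apply: eq_bigr => v _; rewrite inE; case: (v != r).
apply: leq_trans (_ : _ <= \sum_v \sum_w (((w == parent v) && (v != r))
                      + ((v == parent w) && (w != r)))) _; last first.
  by apply: leq_sum => v _; apply: leq_sum => w _; apply: parent_indicator_le_edge.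
under eq_bigr do rewrite big_split /=.
rewrite big_split /= [X in _ <= _ + X]exchange_big /=.
under eq_bigr do rewrite sum_indicator.
by rewrite card_non_root addnn mul2n.
Qed.

End SpanningTree.

Local Open Scope ring_scope.

Lemma sqr_sum_le_card_sum_sqr (R : realDomainType) (I : finType) (F : I -> R) :
  (\sum_i F i) ^+ 2 <= #|I|%:R * \sum_i F i ^+ 2.
Proof.
have sum_const_sqr : \sum_(i : I) \sum_(j : I) F i ^+ 2 = #|I|%:R * \sum_i F i ^+ 2.
  by rewrite mulr_sumr; apply: eq_bigr => i _; rewrite sumr_const mulr_natl.
have sqr_sum : \sum_(i : I) \sum_(j : I) F i * F j = (\sum_i F i) ^+ 2.
  by rewrite expr2 mulr_suml; apply: eq_bigr => i _; rewrite mulr_sumr.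
have : 0 <= \sum_(i : I) \sum_(j : I) (F i - F j) ^+ 2.
  by apply: sumr_ge0 => i _; apply: sumr_ge0 => j _; rewrite sqr_ge0.
have -> : \sum_(i : I) \sum_(j : I) (F i - F j) ^+ 2 =
    \sum_(i : I) \sum_(j : I) F i ^+ 2 + \sum_(i : I) \sum_(j : I) F j ^+ 2
    - 2 * \sum_(i : I) \sum_(j : I) F i * F j.
  rewrite mulr_sumr -big_split -sumrB; apply: eq_bigr => i _.
  rewrite mulr_sumr -big_split -sumrB; apply: eq_bigr => j _ /=; ring.
rewrite [X in _ + X - _]exchange_big /= sum_const_sqr sqr_sum; lra.
Qed.

Lemma ler_3n1_of_quadratic (n s m : int) : 0 <= n -> 2 * n - 2 <= m ->
  (2 * n - s) ^+ 2 <= n * (s - m) -> s <= 3 * n + 1.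
Proof.
move=> n_ge0 m_ge ineq; rewrite leNgt; apply/negP => s_gt.
have : 0 <= (s - 3 * n - 2) * (s - 2 * n + 2) by apply: mulr_ge0; lia.
have : n * (s - m) <= n * (s - (2 * n - 2)) by rewrite ler_wpM2l // lerB.
move: ineq; rewrite !expr2; nia.
Qed.

Section SymplecticEmbedding.
Variables (n : nat) (e : rel 'I_n) (d : 'I_n -> int) (phi : 'I_n -> 'I_n -> int).
Hypothesis e_irr : irreflexive e.
Hypothesis phi_emb : symplectic_embedding e d phi.

Lemma embedding_dot v w :
  \sum_i phi v i * phi w i = - (if v == w then d v else (e v w)%:R).
Proof.
have [Q_ne [Q_diag _]] := phi_emb.
apply: oppr_inj; rewrite opprK -[LHS]/(Qn (phi v) (phi w)).
have [<-|v_ne_w] := eqVneq v w; first exact: Q_diag.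
by rewrite Q_ne //; case: (e v w).
Qed.

Lemma embedding_sum v : \sum_i phi v i = d v + 2.
Proof.
have [_ [Q_diag Q_K]] := phi_emb; have := Q_K v.
rewrite Q_diag /Qn /Kn; under eq_bigr do rewrite mulr1; lra.
Qed.

Lemma decoration_le0 v : d v <= 0.
Proof.
have := embedding_dot v v; rewrite eqxx => dot_vv.
by rewrite -oppr_ge0 -dot_vv; apply: sumr_ge0 => i _; rewrite -expr2 sqr_ge0.
Qed.

Lemma sum_column_sums : \sum_i \sum_v phi v i = \sum_v d v + 2 * n%:R.
Proof.
rewrite exchange_big /=; under eq_bigr do rewrite embedding_sum.
by rewrite big_split /= sumr_const card_ord mulr_natr.
Qed.

Lemma sum_sqr_column_sums :
  \sum_i (\sum_v phi v i) ^+ 2 = - (\sum_v d v + \sum_v \sum_w (e v w)%:R).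
Proof.
under eq_bigr do rewrite expr2 mulr_suml.
under eq_bigr do under eq_bigr do rewrite mulr_sumr.
rewrite exchange_big /=; under eq_bigr do rewrite exchange_big /=.
under eq_bigr do under eq_bigr do rewrite embedding_dot.
rewrite -big_split -sumrN /=; apply: eq_bigr => v _.
rewrite sumrN (bigD1 v) //= eqxx [X in _ = - (_ + X)](bigD1 v) //= e_irr add0r.
by congr (- (_ + _)); apply: eq_bigr => w; rewrite eq_sym => /negbTE ->.
Qed.
End SymplecticEmbedding.

Theorem corollary3p3 (n : nat) (e : rel 'I_n) (d : 'I_n -> int) :
  (0 < n)%N -> in_S e d ->
  `| \sum_(i < n) d i | <= (3 * n + 1)%:R :> int.
Proof.
move=> n_gt0 [_ [e_connect [[[e_sym e_irr] _] [phi phi_emb]]]].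
set D := \sum_(i < n) d i; set E := \sum_(v < n) \sum_(w < n) (e v w)%:R : int.
have D_le0 : D <= 0 by apply: sumr_le0 => v _; exact: (decoration_le0 phi_emb v).
have E_ge : 2 * n%:R - 2 <= E.
  have := card_ordered_edges_ge e_sym (e_connect (Ordinal n_gt0)).
  rewrite -(ler_nat int) natrM -subn1 natrB // natr_sum.
  under eq_bigr do rewrite natr_sum.
  rewrite -/E; lra.
have := sqr_sum_le_card_sum_sqr (fun i => \sum_v phi v i).
rewrite (sum_column_sums phi_emb) (sum_sqr_column_sums e_irr phi_emb).
rewrite card_ord -/D -/E => CS.
rewrite ler0_norm // natrD natrM; apply: (ler_3n1_of_quadratic _ E_ge) => //.
by rewrite opprK addrC -opprD.
Qed.
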